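(* Assume $0<\alpha<\sqrt n$ and $e\in\mathbb{R}^n$ satisfies $\|e\|=\sqrt n$. Let $L$ be a linear subspace, and let $\bar x\ne0$ be a point of $M:=(e+L)\cap\partial K_e(\alpha)$. Let $T_{\bar x}$ denote the tangent space to $M$ at $\bar x$, and let $\theta$ be the angle between $\bar x$ and its orthogonal projection onto $T_{\bar x}$. Then the orthogonal projection $P_{L^\perp}(e)$ of $e$ onto $L^\perp$ satisfies \[ \|P_{L^\perp}(e)\|^2=\frac{(n-\alpha^2)\|\bar x\|^2\sin^2\theta}{n-\alpha^2+(\|\bar x\|-\alpha)^2\sin^2\theta}. \]
   Context: $\mathbb{R}^n$ carries the dot product and Euclidean norm. $K_e(\alpha)=\{x:e^Tx\ge\alpha\|x\|\}$, $\partial$ denotes boundary, $e+L=\{e+v:v\in L\}$, $L^\perp$ is the orthogonal complement of $L$. The tangent space to $M$ at $\bar x$ is $T_{\bar x}=\{v\in L:(e^T\bar x)(e^Tv)-\alpha^2\bar x^Tv=0\}$. *)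

From HB Require Import structures.
From mathcomp Require Import all_boot all_order all_algebra.
From mathcomp Require Import all_classical all_reals all_analysis.
Set Implicit Arguments. Unset Strict Implicit. Unset Printing Implicit Defensive.
Import Order.TTheory GRing.Theory Num.Theory.
Import numFieldNormedType.Exports.
Local Open Scope classical_set_scope.
Local Open Scope ring_scope.

Section Defs.
Variables (R : realType) (n : nat).
Implicit Types (u v w e x : 'rV[R]_n) (S : set 'rV[R]_n).

Definition dotp u v : R := \sum_(i < n) u 0 i * v 0 i.
Definition enorm u : R := Num.sqrt (dotp u u).

Definition Kcone e (alpha : R) : set 'rV[R]_n :=
  [set x | alpha * enorm x <= dotp e x].

Definition bdry S : set 'rV[R]_n := closure S `\` interior S.

Definition orthc (L : {vspace 'rV[R]_n}) : set 'rV[R]_n :=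
  [set v | forall w, w \in L -> dotp v w = 0].

Definition tangent_sp e (alpha : R) (L : {vspace 'rV[R]_n}) xb : set 'rV[R]_n :=
  [set v | v \in L /\ dotp e xb * dotp e v - alpha ^+ 2 * dotp xb v = 0].

Definition is_orth_proj S u p : Prop :=
  S p /\ forall v, S v -> dotp (u - p) v = 0.

(* angle between two vectors, in [0, pi]; with the MathComp convention
   x / 0 = 0 the angle with a zero vector is pi/2 *)
Definition vangle u v : R := acos (dotp u v / (enorm u * enorm v)).

End Defs.

From HB Require Import structures.
From mathcomp Require Import all_boot all_order all_algebra.
From mathcomp Require Import all_classical all_reals all_analysis.
From mathcomp Require Import ring lra.
Import Order.TTheory GRing.Theory Num.Theory.
Import numFieldNormedType.Exports.
Local Open Scope classical_set_scope.
Local Open Scope ring_scope.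
Set Implicit Arguments. Unset Strict Implicit.

(* On the boundary of the cone, e.x = alpha |x|.  Let p = P_{L^perp}(e) and
   s = |p|^2; since e - p and x - p lie in L, e.p = x.p = s.  On L the
   tangency condition is alpha (h.v) = 0 with
   h = |x| e - alpha x - (|x| - alpha) p in L, so T_x = L /\ h^perp and the
   projection of x onto T_x is q = x - p - (x.h / h.h) h.  Hence
   sin^2 theta = |x - q|^2 / |x|^2 = (s + (x.h)^2 / h.h) / |x|^2, and
   x.h = -(|x| - alpha) s, h.h = |x|^2 (n - alpha^2) - (|x| - alpha)^2 s
   turn this into sin^2 theta = s (n - alpha^2) / h.h, which is the claimed
   identity solved for s. *)

Section DotProduct.
Variables (R : realType) (n : nat).
Implicit Types (u v w : 'rV[R]_n).

Lemma dotpC u v : dotp u v = dotp v u.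
Proof. by apply: eq_bigr => i _; rewrite mulrC. Qed.

Lemma dotpDl u v w : dotp (u + v) w = dotp u w + dotp v w.
Proof. by rewrite /dotp -big_split; apply: eq_bigr => i _; rewrite mxE mulrDl. Qed.

Lemma dotpBl u v w : dotp (u - v) w = dotp u w - dotp v w.
Proof. by rewrite /dotp -sumrB; apply: eq_bigr => i _; rewrite !mxE mulrBl. Qed.

Lemma dotpZl k u w : dotp (k *: u) w = k * dotp u w.
Proof. by rewrite /dotp mulr_sumr; apply: eq_bigr => i _; rewrite mxE mulrA. Qed.

Lemma dotpDr u v w : dotp w (u + v) = dotp w u + dotp w v.
Proof. by rewrite dotpC dotpDl !(dotpC w). Qed.

Lemma dotpBr u v w : dotp w (u - v) = dotp w u - dotp w v.
Proof. by rewrite dotpC dotpBl !(dotpC w). Qed.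

Lemma dotpZr k u w : dotp w (k *: u) = k * dotp w u.
Proof. by rewrite dotpC dotpZl dotpC. Qed.

Lemma dotp0r w : dotp w 0 = 0.
Proof. by rewrite /dotp big1 // => i _; rewrite mxE mulr0. Qed.

Lemma dotpp_ge0 u : 0 <= dotp u u.
Proof. by apply: sumr_ge0 => i _; rewrite -expr2 sqr_ge0. Qed.

Lemma dotpp_eq0 u : (dotp u u == 0) = (u == 0).
Proof.
apply/eqP/eqP => [u0|->]; last by rewrite dotp0r.
apply/matrixP => i j; rewrite mxE (ord1 i).
have sq_ge0 (k : 'I_n) : true -> 0 <= u 0 k * u 0 k by rewrite -expr2 sqr_ge0.
by have /eqP := psumr_eq0P sq_ge0 u0 (i := j) isT; rewrite mulf_eq0 orbb => /eqP.
Qed.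

Lemma enorm_sqr u : enorm u ^+ 2 = dotp u u.
Proof. by rewrite sqr_sqrtr // dotpp_ge0. Qed.

Lemma enorm_ge0 u : 0 <= enorm u.
Proof. exact: sqrtr_ge0. Qed.

Lemma dotp_orth_split u q :
  dotp (u - q) q = 0 -> dotp u u = dotp q q + dotp (u - q) (u - q).
Proof.
by rewrite !dotpBl !dotpBr (dotpC q u) => /eqP; rewrite subr_eq0 => /eqP ->; ring.
Qed.

End DotProduct.

Section OrthogonalProjection.
Variables (R : realType) (n : nat).
Implicit Types (u v p : 'rV[R]_n) (S : set 'rV[R]_n) (L : {vspace 'rV[R]_n}).

Lemma orth_proj_uniq S u p1 p2 :
  is_orth_proj S u p1 -> is_orth_proj S u p2 -> S (p1 - p2) -> p1 = p2.
Proof.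
move=> [_ o1] [_ o2] S12; apply/eqP; rewrite -subr_eq0 -dotpp_eq0.
have dE : p1 - p2 = (u - p2) - (u - p1) by rewrite opprB [RHS]addrC addrA subrK.
by rewrite {1}dE dotpBl o1 // o2 // subrr.
Qed.

Lemma orth_proj_span (X : seq 'rV[R]_n) u :
  exists a, is_orth_proj [set v | v \in <<X>>%VS] u a.
Proof.
elim: X u => [|x X IH] u.
  exists 0; split=> [|v]; first exact: mem0v.
  by rewrite /= span_nil memv0 => /eqP ->; rewrite dotp0r.
have [a [aX ua_orth]] := IH u.
have [b [bX xb_orth]] := IH x.
have sub_span v : v \in <<X>>%VS -> v \in <<x :: X>>%VS.
  by rewrite span_cons; exact: subvP (addvSr _ _) v.
set y := x - b.
pose t := dotp (u - a) y / dotp y y.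
have t_def : dotp (u - a) y = t * dotp y y.
  have [/eqP|y0] := eqVneq (dotp y y) 0; last by rewrite mulfVK.
  by rewrite dotpp_eq0 => /eqP ->; rewrite !dotp0r mulr0.
have y_span : y \in <<x :: X>>%VS.
  by apply: memvB; [apply/memv_span/mem_head | exact: sub_span].
exists (a + t *: y); split; first by apply: memvD; [exact: sub_span | exact: memvZ].
move=> v /=; rewrite span_cons => /memv_addP [c /vlineP [k ->] [w wX ->]].
have -> : k *: x + w = k *: y + (k *: b + w) by rewrite scalerBr addrA subrK.
have bwX : k *: b + w \in <<X>>%VS by rewrite memvD // memvZ.
rewrite opprD addrA dotpDr ![dotp (_ - t *: y) _]dotpBl !dotpZl !dotpZr.
by rewrite t_def ua_orth // (xb_orth _ bwX) mulrCA !subrr mulr0 subrr addr0.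
Qed.

Lemma orth_proj_vspace L u : exists a, is_orth_proj [set v | v \in L] u a.
Proof.
have [a] := orth_proj_span (vbasis L) u.
by have /andP [/eqP -> _] := vbasisP L; exists a.
Qed.

Lemma orthc_proj_compl L u p : is_orth_proj (orthc L) u p -> u - p \in L.
Proof.
move=> p_proj; have [a [aL ua_orth]] := orth_proj_vspace L u.
have a_proj : is_orth_proj (orthc L) u (u - a).
  by split=> [w wL|v v_orth]; rewrite ?subKr ?ua_orth // dotpC v_orth.
rewrite (orth_proj_uniq p_proj a_proj) ?subKr // => w wL.
by have [pL _] := p_proj; rewrite dotpBl pL // ua_orth // subrr.
Qed.

Lemma sin_vangle_orth u q : u != 0 -> dotp (u - q) q = 0 ->
  sin (vangle u q) ^+ 2 = dotp (u - q) (u - q) / dotp u u.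
Proof.
move=> u0 orth; have pyth := dotp_orth_split orth.
have uq : dotp u q = enorm q ^+ 2.
  by move: orth; rewrite dotpBl enorm_sqr => /eqP; rewrite subr_eq0 => /eqP.
have nu_gt0 : 0 < enorm u by rewrite sqrtr_gt0 lt_def dotpp_eq0 u0 dotpp_ge0.
have cos_val : dotp u q / (enorm u * enorm q) = enorm q / enorm u.
  have [->|q0] := eqVneq (enorm q) 0; first by rewrite mulr0 invr0 mulr0 mul0r.
  by rewrite uq; field; rewrite q0 gt_eqF.
have q_le_u : enorm q <= enorm u.
  rewrite -(ler_pXn2r (isT : (0 < 2)%N)) ?nnegrE ?enorm_ge0 //.
  by rewrite !enorm_sqr pyth lerDl dotpp_ge0.
rewrite /vangle cos_val sin_acos; last first.
  rewrite ler_pdivrMr ?ler_pdivlMr // mul1r (le_trans _ (enorm_ge0 q)) //.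
  by rewrite mulN1r oppr_le0 ltW.
rewrite sqr_sqrtr; last first.
  by rewrite subr_ge0 expr_le1 ?divr_ge0 ?enorm_ge0 // ler_pdivrMr ?mul1r.
have -> : dotp (u - q) (u - q) = dotp u u - dotp q q by rewrite pyth [RHS]addrC addKr.
by rewrite -!enorm_sqr; field; rewrite gt_eqF.
Qed.

End OrthogonalProjection.

Section ConeBoundary.
Variables (R : realType) (n : nat).

Lemma dotp_continuous (f g : 'rV[R]_n -> 'rV[R]_n) :
  continuous f -> continuous g -> continuous (fun x => dotp (f x) (g x)).
Proof.
move=> cf cg; rewrite /dotp.
apply: (continuous_big (@add_continuous R) (F := fun i x => f x 0 i * g x 0 i)) => i _ x.
have coord (h : 'rV[R]_n -> 'rV[R]_n) :
    continuous h -> {for x, continuous (fun y => h y 0 i)}.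
  by move=> ch; exact: (continuous_comp (ch x) (@coord_continuous _ _ _ 0 i (h x))).
exact: continuousM (coord f cf) (coord g cg).
Qed.

Lemma enorm_continuous : continuous (@enorm R n).
Proof.
have dd : continuous (fun u : 'rV[R]_n => dotp u u) by apply: dotp_continuous => ?; exact: cvg_id.
move=> x; apply: (continuous_comp (dd x)).
exact: sqrt_continuous.
Qed.

Lemma bdry_ge0_continuous (f : 'rV[R]_n -> R) x :
  continuous f -> bdry [set y | 0 <= f y] x -> f x = 0.
Proof.
move=> cf [x_cl x_int]; apply/eqP; rewrite eq_le; apply/andP; split.
  rewrite leNgt; apply/negP => fx_gt0; apply: x_int.
  have gt0_open : open [set y | 0 < f y].
    exact: (open_comp (D := [set r : R | 0 < r]) (fun y _ => cf y) (@open_gt _ 0)).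
  apply: (filterS (P := [set y | 0 < f y])) => [y /ltW //|].
  exact: open_nbhs_nbhs.
have ge0_closed : closed [set y | 0 <= f y].
  exact: (preimage_closed (D := [set r : R | 0 <= r]) (fun y _ => cf y) (@closed_ge _ 0)).
by move: x_cl; rewrite -(closure_id _).1.
Qed.

Lemma bdry_Kcone (e : 'rV[R]_n) alpha x :
  bdry (Kcone e alpha) x -> dotp e x = alpha * enorm x.
Proof.
have -> : Kcone e alpha = [set y | 0 <= dotp e y - alpha * enorm y].
  by apply/seteqP; split=> y /=; rewrite subr_ge0.
move/bdry_ge0_continuous => fx0; apply/eqP; rewrite -subr_eq0 fx0 //.
have dotp_e_cont : continuous (dotp e).
  by apply: dotp_continuous; [exact: cst_continuous | move=> ?; exact: cvg_id].
move=> y; apply: continuousB; first exact: dotp_e_cont.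
by apply: continuousM; [exact: cst_continuous | exact: enorm_continuous].
Qed.

End ConeBoundary.

Section TangentSpace.
Variables (R : realType) (n : nat) (alpha : R) (e xb p : 'rV[R]_n).
Variable L : {vspace 'rV[R]_n}.
Hypothesis alpha_gt0 : 0 < alpha.
Hypothesis xbe_in_L : xb - e \in L.
Hypothesis xb_on_cone : dotp e xb = alpha * enorm xb.
Hypothesis p_proj : is_orth_proj (orthc L) e p.

Local Notation r := (enorm xb).
Local Notation s := (dotp p p).

Definition tangent_normal : 'rV[R]_n := r *: e - alpha *: xb - (r - alpha) *: p.
Local Notation h := tangent_normal.

Let p_orthL w : w \in L -> dotp p w = 0.
Proof. by case: p_proj => pL _; exact: pL. Qed.

Let ep_in_L : e - p \in L.
Proof. exact: orthc_proj_compl p_proj. Qed.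

Let xbp_in_L : xb - p \in L.
Proof. by rewrite -(subrK e xb) -addrA memvD. Qed.

Lemma dotp_proj_e : dotp e p = s.
Proof. by apply/eqP; rewrite -subr_eq0 -dotpBl dotpC p_orthL. Qed.

Lemma dotp_proj_xb : dotp xb p = s.
Proof. by apply/eqP; rewrite -subr_eq0 -dotpBl dotpC p_orthL. Qed.

Lemma tangent_normal_in : h \in L.
Proof.
have -> : h = r *: (e - p) - alpha *: (xb - p).
  by apply/matrixP => i j; rewrite !mxE; ring.
by rewrite memvB // memvZ.
Qed.

Lemma tangent_spE v : tangent_sp e alpha L xb v <-> v \in L /\ dotp h v = 0.
Proof.
have normal_eq : v \in L ->
    dotp e xb * dotp e v - alpha ^+ 2 * dotp xb v = alpha * dotp h v.
  by move=> vL; rewrite /tangent_normal !dotpBl !dotpZl p_orthL // xb_on_cone; ring.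
split=> [[vL]|[vL hv]]; last by split=> //; rewrite normal_eq // hv mulr0.
by rewrite normal_eq // => /eqP; rewrite mulf_eq0 gt_eqF //= => /eqP.
Qed.

Lemma dotp_xb_normal : dotp xb h = - ((r - alpha) * s).
Proof.
rewrite /tangent_normal !dotpBr !dotpZr dotp_proj_xb (dotpC xb e) xb_on_cone -enorm_sqr.
ring.
Qed.

Lemma dotp_normal : dotp h h = r ^+ 2 * (dotp e e - alpha ^+ 2) - (r - alpha) ^+ 2 * s.
Proof.
rewrite {1}/tangent_normal !dotpBl !dotpZl dotp_xb_normal (p_orthL tangent_normal_in).
rewrite /tangent_normal !dotpBr !dotpZr dotp_proj_e xb_on_cone; ring.
Qed.

Lemma dotp_normal_neq0 : 0 < dotp e e - alpha ^+ 2 -> 0 < r -> dotp h h != 0.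
Proof.
move=> k_gt0 r_gt0; apply/negP => /eqP hh0.
have /eqP : dotp xb h = 0 by move: hh0 => /eqP; rewrite dotpp_eq0 => /eqP ->; rewrite dotp0r.
rewrite dotp_xb_normal oppr_eq0 => /eqP rs0.
have : dotp h h = r ^+ 2 * (dotp e e - alpha ^+ 2).
  by rewrite dotp_normal (expr2 (r - alpha)) -mulrA rs0 mulr0 subr0.
by rewrite hh0 => /esym/eqP; rewrite mulf_eq0 sqrf_eq0 !gt_eqF.
Qed.

Lemma tangent_proj_dist q : dotp h h != 0 ->
  is_orth_proj (tangent_sp e alpha L xb) xb q ->
  dotp (xb - q) (xb - q) = s + dotp xb h ^+ 2 / dotp h h.
Proof.
move=> hh0 q_proj; pose t := dotp xb h / dotp h h.
have p_orth_h : dotp p h = 0 by rewrite p_orthL ?tangent_normal_in.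
have xbq' : xb - (xb - p - t *: h) = p + t *: h by apply/matrixP => i j; rewrite !mxE; ring.
have q'_proj : is_orth_proj (tangent_sp e alpha L xb) xb (xb - p - t *: h).
  split.
    apply/tangent_spE; split; first by rewrite memvB ?memvZ ?tangent_normal_in.
    by rewrite !dotpBr dotpZr (dotpC h) (dotpC h) p_orth_h subr0 mulfVK ?subrr.
  move=> v /tangent_spE [vL hv].
  by rewrite xbq' dotpDl dotpZl hv p_orthL // mulr0 addr0.
have -> : q = xb - p - t *: h.
  have [/tangent_spE [qL hq] _] := q_proj; have [/tangent_spE [q'L hq'] _] := q'_proj.
  apply: orth_proj_uniq q_proj q'_proj _.
  by apply/tangent_spE; rewrite memvB // dotpBr hq hq' subrr.
rewrite xbq' dotpDl !(dotpDr p (t *: h)) !dotpZl !dotpZr p_orth_h (dotpC h p) p_orth_h.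
by rewrite /t; field.
Qed.

End TangentSpace.

Theorem lemma5p3 (R : realType) (n : nat) (alpha : R) (e : 'rV[R]_n)
    (L : {vspace 'rV[R]_n}) (xb : 'rV[R]_n) :
  0 < alpha -> alpha < Num.sqrt (n%:R) ->
  enorm e = Num.sqrt (n%:R) ->
  xb != 0 ->
  xb - e \in L ->
  bdry (Kcone e alpha) xb ->
  forall p : 'rV[R]_n, is_orth_proj (orthc L) e p ->
  forall q : 'rV[R]_n, is_orth_proj (tangent_sp e alpha L xb) xb q ->
  let theta := vangle xb q in
  enorm p ^+ 2 =
    (n%:R - alpha ^+ 2) * enorm xb ^+ 2 * sin theta ^+ 2 /
    (n%:R - alpha ^+ 2 + (enorm xb - alpha) ^+ 2 * sin theta ^+ 2).
Proof.
move=> alpha_gt0 alpha_lt enorm_e xb0 xbe_L /bdry_Kcone xb_cone p p_proj q q_proj theta.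
have ee : dotp e e = n%:R by rewrite -enorm_sqr enorm_e sqr_sqrtr.
have k_gt0 : 0 < dotp e e - alpha ^+ 2 by rewrite ee; have := sqr_sqrtr (ler0n R n); nra.
have r_gt0 : 0 < enorm xb by rewrite sqrtr_gt0 lt_def dotpp_eq0 xb0 dotpp_ge0.
have hh0 := dotp_normal_neq0 xbe_L xb_cone p_proj k_gt0 r_gt0.
have hhE := dotp_normal xbe_L xb_cone p_proj.
set k := dotp e e - alpha ^+ 2 in k_gt0 hhE.
set H := dotp (tangent_normal alpha e xb p) _ in hh0 hhE.
have sin2 : sin theta ^+ 2 = dotp p p * k / H.
  rewrite sin_vangle_orth //; last by case: q_proj => qT; apply.
  rewrite (tangent_proj_dist alpha_gt0 xbe_L xb_cone p_proj hh0 q_proj).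
  rewrite (dotp_xb_normal xbe_L xb_cone p_proj) -/H -(enorm_sqr xb).
  by move: hh0; rewrite hhE => hh0; field; rewrite hh0 gt_eqF.
have denom : k + (enorm xb - alpha) ^+ 2 * (dotp p p * k / H) = k * (enorm xb ^+ 2 * k) / H.
  by move: hh0; rewrite hhE => hh0; field.
have -> : n%:R - alpha ^+ 2 = k by rewrite /k ee.
rewrite sin2 denom enorm_sqr; field.
by rewrite hh0 !gt_eqF.
Qed.
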